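(* Let $G$ and $H$ be two vertex-disjoint graphs, considered as starting positions of the Maker-Breaker domination game, and let $G\bowtie H$ denote their join (the union of $G$ and $H$ together with all edges $uv$ with $u\in V(G)$, $v\in V(H)$). (i) If $G=K_1$ and $o(H)=\mathcal S$ (or $H=K_1$ and $o(G)=\mathcal S$), then $o(G\bowtie H)=\mathcal N$. (ii) Otherwise, $o(G\bowtie H)=\mathcal D$.
   Context: The Maker-Breaker domination game on a graph: Dominator and Staller alternately choose a not-yet-chosen vertex (no passing), starting with all vertices unchosen; when all vertices are chosen, Dominator wins if his vertices form a dominating set of the graph, otherwise Staller wins. The outcome $o(\cdot)$ is $\mathcal D$ if Dominator has a winning strategy both as first and as second player, $\mathcal S$ if Staller has a winning strategy both as first and as second player, and $\mathcal N$ if the first player has a winning strategy; every graph has one of these three outcomes. $K_1$ is the graph with a single vertex. *)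

From mathcomp Require Import all_boot.
Set Implicit Arguments. Unset Strict Implicit. Unset Printing Implicit Defensive.

(* A simple graph on a finite vertex type T is a symmetric irreflexive rel T. *)

Definition dominating (T : finType) (e : rel T) (D : {set T}) : bool :=
  [forall v : T, (v \in D) || [exists u in D, e u v]].

(* Returns true iff Dominator has a winning strategy.
   [n] is fuel (number of remaining moves); the game ends when no vertex is
   free, Dominator then winning iff D is dominating. *)
Fixpoint dom_game (T : finType) (e : rel T) (n : nat) (D S : {set T})
    (dturn : bool) : bool :=
  match n with
  | 0 => dominating e D
  | n'.+1 =>
    let F := ~: (D :|: S) in
    if F == set0 then dominating e D else
    if dturn then [exists v in F, dom_game e n' (v |: D) S false]
    else [forall v in F, dom_game e n' D (v |: S) true]
  end.

Definition dom_wins_first (T : finType) (e : rel T) : bool :=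
  dom_game e #|T| set0 set0 true.
Definition dom_wins_second (T : finType) (e : rel T) : bool :=
  dom_game e #|T| set0 set0 false.

Inductive outcome := OutD | OutS | OutN.

(* o(G) = D : Dominator wins as first and as second player;
   o(G) = S : Staller wins as first and as second player;
   o(G) = N : the first player wins (whoever it is). *)
Definition outcome_is (T : finType) (e : rel T) (o : outcome) : Prop :=
  match o with
  | OutD => dom_wins_first e /\ dom_wins_second e
  | OutS => ~~ dom_wins_first e /\ ~~ dom_wins_second e
  | OutN => dom_wins_first e /\ ~~ dom_wins_second e
  end.

Definition join_rel (T1 T2 : finType) (e1 : rel T1) (e2 : rel T2) : rel (T1 + T2)%type :=
  fun x y => match x, y with
  | inl a, inl b => e1 a b
  | inr a, inr b => e2 a b
  | _, _ => true
  end.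

From mathcomp Require Import all_boot zify.
Set Implicit Arguments. Unset Strict Implicit. Unset Printing Implicit Defensive.

(** If one side is K_1 = {g}, then g is a universal vertex of the join.
Dominator moving first claims g and is done.  Staller moving first must claim
g, since otherwise Dominator claims it; after that the join is dominated by
Dominator's vertices exactly when the other side is, so what remains is the
game on the other side with Dominator to move.  If both sides have at least two
vertices, Dominator answers Staller's first move with another vertex of the
same side; any vertex of the opposite side then completes a dominating set,
and Staller cannot block two of them.  In every case Dominator wins as first
player as soon as he wins as second player, because an extra vertex never
hurts Dominator. *)

Section DominationGame.
Variables (T : finType) (e : rel T).
Implicit Types (D S : {set T}) (v : T).

Lemma dominatingS D D' : D \subset D' -> dominating e D -> dominating e D'.
Proof.
move=> /subsetP sDD' /forallP domD; apply/forallP => v.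
case/orP: (domD v) => [/sDD' -> // | /exists_inP [u /sDD' uD' euv]].
by apply/orP; right; apply/exists_inP; exists u.
Qed.

Lemma setC_claimD v D S : ~: ((v |: D) :|: S) = ~: (D :|: S) :\ v.
Proof. by apply/setP => x; rewrite !inE !negb_or andbA. Qed.

Lemma setC_claimS v D S : ~: (D :|: (v |: S)) = ~: (D :|: S) :\ v.
Proof. by apply/setP => x; rewrite !inE !negb_or andbCA. Qed.

Lemma dom_gameS n D S t : dom_game e n.+1 D S t =
  if ~: (D :|: S) == set0 then dominating e D
  else if t then [exists v in ~: (D :|: S), dom_game e n (v |: D) S false]
  else [forall v in ~: (D :|: S), dom_game e n D (v |: S) true].
Proof. by []. Qed.

Lemma dom_game_claim n D S v : v \in ~: (D :|: S) ->
  dom_game e n (v |: D) S false -> dom_game e n.+1 D S true.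
Proof.
move=> vF win /=; rewrite ifN; last by apply/set0Pn; exists v.
by apply/exists_inP; exists v.
Qed.

Lemma dom_game_answer n D S : ~: (D :|: S) != set0 ->
  (forall v, v \in ~: (D :|: S) -> dom_game e n D (v |: S) true) ->
  dom_game e n.+1 D S false.
Proof. by move=> F0 win /=; rewrite ifN //; apply/forall_inP. Qed.

Lemma dominating_dom_game n D S t : dominating e D -> dom_game e n D S t.
Proof.
elim: n D S t => [|n IH] D S t domD //=; case: ifP => // /set0Pn [v vF].
case: t; last by apply/forall_inP => w _; apply: IH.
by apply/exists_inP; exists v => //; apply: IH (dominatingS (subsetUr _ _) domD).
Qed.

Lemma dom_game_dominating n D S t :
  dom_game e n D S t -> dominating e (D :|: ~: S).
Proof.
elim: n D S t => [|n IH] D S t /=; first exact/dominatingS/subsetUl.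
case: ifP => [_ | /set0Pn [v vF]]; first exact/dominatingS/subsetUl.
case: t => [/exists_inP [w wF /IH] | /forall_inP /(_ v vF) /IH].
  apply/dominatingS; rewrite -setUA subUset subxx andbT sub1set !inE.
  by move: wF; rewrite !inE negb_or => /andP [_ ->]; rewrite orbT.
by apply/dominatingS; rewrite setUS // setCS subsetUr.
Qed.

Lemma dom_game_fuelS n D S t :
  #|~: (D :|: S)| <= n -> dom_game e n.+1 D S t = dom_game e n D S t.
Proof.
elim: n D S t => [|n IH] D S t cardF.
  by rewrite /= (cards0_eq (_ : #|~: (D :|: S)| = 0)) ?eqxx //; lia.
rewrite [LHS]dom_gameS [RHS]dom_gameS; case: ifP => // _.
have card_claim v : v \in ~: (D :|: S) -> #|~: (D :|: S) :\ v| <= n.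
  by move=> vF; move: cardF; rewrite (cardsD1 v) vF.
case: t; [apply: eq_existsb | apply: eq_forallb] => v;
  case vF: (v \in _) => //; rewrite IH //.
  by rewrite setC_claimD card_claim.
by rewrite setC_claimS card_claim.
Qed.

Lemma dom_game_subset n D D' S t :
  D \subset D' -> dom_game e n D S t -> dom_game e n D' S t.
Proof.
elim: n D D' S t => [|n IH] D D' S t sDD' win; first exact: dominatingS win.
(* When the strategy for D claims a vertex already owned in D', any free vertex
   does as well. *)
have /dominatingS domDS := dom_game_dominating win.
have /subsetP sF : ~: (D' :|: S) \subset ~: (D :|: S) by rewrite setCS setSU.
rewrite dom_gameS in win; rewrite dom_gameS.
case: ifPn => [/eqP F'0 | /set0Pn [y yF']].
  apply: domDS; rewrite subUset sDD'; apply/subsetP => x xS; apply: contraT => xD'.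
  have: x \in ~: (D' :|: S) by rewrite !inE negb_or xD' -in_setC.
  by rewrite F'0 inE.
rewrite ifN in win; last by apply/set0Pn; exists y; apply: sF.
case: t win => [/exists_inP [z zF win] | /forall_inP win]; last first.
  by apply/forall_inP => w /sF wF; apply: IH (win w wF).
apply/exists_inP; case: (boolP (z \in ~: (D' :|: S))) => [zF' | zF'].
  by exists z => //; apply: IH win; apply: setUS.
have zD' : z \in D'.
  by move: zF zF'; rewrite !inE negbK => /norP [_ /negbTE ->]; rewrite orbF.
exists y => //; apply: IH win; rewrite subUset sub1set !inE zD' orbT.
exact: subset_trans sDD' (subsetUr _ _).
Qed.

Lemma dom_wins_second_first : dom_wins_second e -> dom_wins_first e.
Proof.
rewrite /dom_wins_second /dom_wins_first.
case cardT: #|T| => [// | n] win; have /card_gt0P [v _] : 0 < #|T| by rewrite cardT.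
have vF : v \in ~: (set0 :|: set0) by rewrite !inE.
apply: (dom_game_claim vF); rewrite -dom_game_fuelS; last first.
  rewrite setC_claimD setU0 setC0; move: (cardsD1 v [set: T]).
  by rewrite cardsT cardT inE add1n => -[<-].
exact: dom_game_subset (sub0set _) win.
Qed.

Lemma dom_game_double_threat n D S a b : a != b ->
  a \in ~: (D :|: S) -> b \in ~: (D :|: S) ->
  dominating e (a |: D) -> dominating e (b |: D) -> dom_game e n.+2 D S false.
Proof.
move=> ab aF bF domA domB; apply: dom_game_answer => [|w wF].
  by apply/set0Pn; exists a.
have [x xF domX] : exists2 x, x \in ~: (D :|: (w |: S)) & dominating e (x |: D).
  rewrite setC_claimS; case: (eqVneq w a) => [-> | wa].
    by exists b; rewrite // in_setD1 eq_sym ab.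
  by exists a; rewrite // in_setD1 eq_sym wa.
exact: dom_game_claim xF (dominating_dom_game _ _ _ domX).
Qed.

End DominationGame.

Lemma dom_wins_first_notS (T : finType) (e : rel T) :
  ~ outcome_is e OutS -> dom_wins_first e.
Proof.
move=> notS; case first: (dom_wins_first e) => //; case: notS; split.
  by rewrite first.
exact: contraFN (@dom_wins_second_first _ e) first.
Qed.

Section Embedding.
Variables (T T' : finType) (e : rel T) (e' : rel T') (f : T' -> T).
Variables D0 S0 : {set T}.
Hypotheses (f_inj : injective f) (free_range : ~: (D0 :|: S0) = f @: [set: T']).
Hypothesis dominating_imset :
  forall D' : {set T'}, dominating e (D0 :|: f @: D') = dominating e' D'.

Lemma setC_imset (D' S' : {set T'}) :
  ~: ((D0 :|: f @: D') :|: (S0 :|: f @: S')) = f @: ~: (D' :|: S').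
Proof.
apply/setP => x; case: (boolP (x \in f @: [set: T'])) => [/imsetP [y _ ->] | xf].
  have: f y \in ~: (D0 :|: S0) by rewrite free_range imset_f.
  by rewrite !inE !mem_imset // !inE => /norP [/negbTE -> /negbTE ->].
have: x \in D0 :|: S0 by rewrite -[_ \in _]negbK -in_setC free_range.
have xf' (A : {set T'}) : (x \in f @: A) = false.
  by apply: contraNF xf; apply/subsetP/imsetS/subsetT.
by rewrite !inE !xf' !orbF => /orP [] ->; rewrite ?orbT.
Qed.

Lemma dom_game_imset n (D' S' : {set T'}) t :
  dom_game e n (D0 :|: f @: D') (S0 :|: f @: S') t = dom_game e' n D' S' t.
Proof.
elim: n D' S' t => [|n IH] D' S' t; first exact: dominating_imset.
rewrite !dom_gameS setC_imset imset_eq0; case: ifP => // _; case: t.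
  apply/exists_inP/exists_inP => [[_ /imsetP [y yF ->]] | [y yF]].
    by rewrite setUCA -imsetU1 IH => win; exists y.
  by rewrite -IH imsetU1 setUCA => win; exists (f y); rewrite ?imset_f.
apply/forall_inP/forall_inP => [win y yF | win _ /imsetP [y yF ->]].
  by rewrite -IH imsetU1 setUCA; apply/win/imset_f.
by rewrite setUCA -imsetU1 IH; apply: win.
Qed.

End Embedding.

Section UniversalVertex.
Variables (T T' : finType) (e : rel T) (e' : rel T') (u : T) (f : T' -> T).
Hypothesis u_universal : forall v, v != u -> e u v /\ e v u.
Hypotheses (f_inj : injective f) (f_range : f @: [set: T'] = [set~ u]).
Hypotheses (f_edge : forall x y, e (f x) (f y) = e' x y) (T'_gt0 : 0 < #|T'|).

Lemma dominating_universal (D : {set T}) : u \in D -> dominating e D.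
Proof.
move=> uD; apply/forallP => v; case: (eqVneq v u) => [-> | vu]; first by rewrite uD.
by apply/orP; right; apply/exists_inP; exists u => //; case: (u_universal vu).
Qed.

Lemma universal_dom_wins_first : dom_wins_first e.
Proof.
rewrite /dom_wins_first; have: 0 < #|T| by apply/card_gt0P; exists u.
case: #|T| => // n _; apply: (dom_game_claim (v := u)); first by rewrite !inE.
by apply/dominating_dom_game/dominating_universal; rewrite setU11.
Qed.

Lemma dominating_universal_imset (D' : {set T'}) :
  dominating e (set0 :|: f @: D') = dominating e' D'.
Proof.
rewrite set0U; apply/forallP/forallP => domD v.
  case/orP: (domD (f v)) => [|/exists_inP [_ /imsetP [x xD ->]]].
    by rewrite mem_imset // => ->.
  by rewrite f_edge => exv; apply/orP; right; apply/exists_inP; exists x.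
case: (eqVneq v u) => [-> | vu].
  have /card_gt0P [x0 _] := T'_gt0.
  have [x xD] : exists x, x \in D'.
    by case/orP: (domD x0) => [| /exists_inP [x xD _]]; [exists x0 | exists x].
  apply/orP; right; apply/exists_inP; exists (f x); first exact: imset_f.
  by apply: (proj2 (u_universal _)); rewrite -in_setC1 -f_range imset_f.
have /imsetP [v' _ ->] : v \in f @: [set: T'] by rewrite f_range !inE.
case/orP: (domD v') => [v'D | /exists_inP [x xD exv']]; apply/orP.
  by left; apply: imset_f.
by right; apply/exists_inP; exists (f x); rewrite ?imset_f ?f_edge.
Qed.

Lemma card_universal : #|T| = #|T'|.+1.
Proof.
have T_gt0 : 0 < #|T| by apply/card_gt0P; exists u.
have := card_imset [set: T'] f_inj.
by rewrite f_range cardsC1 cardsT => <-; rewrite prednK.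
Qed.

Lemma universal_dom_wins_second : dom_wins_second e = dom_wins_first e'.
Proof.
rewrite /dom_wins_second /dom_wins_first card_universal.
have free_u : ~: (set0 :|: [set u]) = f @: [set: T'] by rewrite f_range set0U.
have := dom_game_imset f_inj free_u dominating_universal_imset #|T'| set0 set0 true.
rewrite !imset0 !setU0 => <-; rewrite dom_gameS ifN; last first.
  by apply/set0Pn; exists u; rewrite !inE.
apply/forall_inP/idP => [win | win v _]; first by rewrite -(setU0 [set u]) win ?inE.
case: (eqVneq v u) => [-> | vu]; first by rewrite setU0.
rewrite -(prednK T'_gt0); apply: (dom_game_claim (v := u)).
  by rewrite !inE orbF eq_sym.
by apply/dominating_dom_game/dominating_universal; rewrite setU11.
Qed.

End UniversalVertex.

Section Join.
Variables (T1 T2 : finType) (e1 : rel T1) (e2 : rel T2).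
Local Notation J := (join_rel e1 e2).

Lemma join_K1l : #|T1| = 1 -> 0 < #|T2| ->
  dom_wins_first J /\ dom_wins_second J = dom_wins_first e2.
Proof.
move=> /fintype1 [g all_g] T2_gt0.
have universal v : v != inl g -> J (inl g) v /\ J v (inl g).
  by case: v => // a; rewrite all_g eqxx.
have range : inr @: [set: T2] = [set~ inl g].
  apply/setP => -[a | b]; rewrite !inE.
    by rewrite all_g eqxx; apply/imsetP => -[].
  by rewrite mem_imset ?inE //; apply: inr_inj.
split; first exact: universal_dom_wins_first universal.
exact: universal_dom_wins_second universal (@inr_inj _ _) range
  (fun _ _ => erefl) T2_gt0.
Qed.

Lemma join_K1r : #|T2| = 1 -> 0 < #|T1| ->
  dom_wins_first J /\ dom_wins_second J = dom_wins_first e1.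
Proof.
move=> /fintype1 [g all_g] T1_gt0.
have universal v : v != inr g -> J (inr g) v /\ J v (inr g).
  by case: v => // b; rewrite all_g eqxx.
have range : inl @: [set: T1] = [set~ inr g].
  apply/setP => -[a | b]; rewrite !inE.
    by rewrite mem_imset ?inE //; apply: inl_inj.
  by rewrite all_g eqxx; apply/imsetP => -[].
split; first exact: universal_dom_wins_first universal.
exact: universal_dom_wins_second universal (@inl_inj _ _) range
  (fun _ _ => erefl) T1_gt0.
Qed.

Definition is_left (x : T1 + T2) : bool := if x is inl _ then true else false.

Lemma join_rel_sides x y : is_left x != is_left y -> J x y.
Proof. by case: x; case: y. Qed.

Lemma join_dominating (D : {set T1 + T2}) x y :
  x \in D -> y \in D -> is_left x != is_left y -> dominating J D.
Proof.
move=> xD yD xy; apply/forallP => v; apply/orP; right; apply/exists_inP.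
case: (eqVneq (is_left x) (is_left v)) => [xv | xv].
  by exists y; rewrite // join_rel_sides // -xv eq_sym.
by exists x; rewrite ?join_rel_sides.
Qed.

Lemma join_dom_wins_second : 1 < #|T1| -> 1 < #|T2| -> dom_wins_second J.
Proof.
move=> T1_gt1 T2_gt1.
have pair_on s : exists y1 y2, [/\ y1 != y2, is_left y1 = s & is_left y2 = s].
  case: s; [move: T1_gt1 | move: T2_gt1] => /card_gt1P [a [b [_ _ ab]]].
    by exists (inl a), (inl b).
  by exists (inr a), (inr b).
have [n cardJ] : exists n, #|{: T1 + T2}| = n.+4.
  by exists (#|T1| + #|T2| - 4); rewrite card_sum; lia.
rewrite /dom_wins_second cardJ; apply: dom_game_answer => [|w _].
  by rewrite -card_gt0 setU0 setC0 cardsT cardJ.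
have [d dw sd] : exists2 d, d != w & is_left d = is_left w.
  have [a [b [ab sa sb]]] := pair_on (is_left w).
  by case: (eqVneq a w) => [aw | aw]; [exists b; rewrite // -aw eq_sym | exists a].
have [y1 [y2 [y12 s1 s2]]] := pair_on (~~ is_left w).
have side_neq a b : is_left a != is_left b -> a != b by apply: contraNneq => ->.
apply: (dom_game_claim (v := d)); first by rewrite !inE orbF.
have other_side y : is_left y = ~~ is_left w ->
    y \in ~: ((d |: set0) :|: (w |: set0)) /\ dominating J (y |: (d |: set0)).
  move=> sy; split.
    by rewrite !inE !orbF negb_or !side_neq // sy ?sd; case: (is_left w).
  apply: (@join_dominating _ y d); rewrite ?inE ?eqxx ?orbT //.
  by rewrite sy sd; case: (is_left w).
have [y1F domY1] := other_side y1 s1; have [y2F domY2] := other_side y2 s2.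
exact: dom_game_double_threat y12 y1F y2F domY1 domY2.
Qed.

End Join.

Theorem theorem5 (T1 T2 : finType) (e1 : rel T1) (e2 : rel T2)
  (sym1 : symmetric e1) (irr1 : irreflexive e1)
  (sym2 : symmetric e2) (irr2 : irreflexive e2)
  (ne1 : 0 < #|T1|) (ne2 : 0 < #|T2|) :
  (((#|T1| = 1 /\ outcome_is e2 OutS) \/ (#|T2| = 1 /\ outcome_is e1 OutS)) ->
     outcome_is (join_rel e1 e2) OutN) /\
  (~ ((#|T1| = 1 /\ outcome_is e2 OutS) \/ (#|T2| = 1 /\ outcome_is e1 OutS)) ->
     outcome_is (join_rel e1 e2) OutD).
Proof.
split=> [[[T1_1 [lose2 _]] | [T2_1 [lose1 _]]] | notS] /=.
- by have [win ->] := join_K1l e1 e2 T1_1 ne2.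
- by have [win ->] := join_K1r e1 e2 T2_1 ne1.
have [T1_1 | T1_ne1] := eqVneq #|T1| 1.
  have [win ->] := join_K1l e1 e2 T1_1 ne2; split=> //.
  by apply: dom_wins_first_notS => S2; apply: notS; left.
have [T2_1 | T2_ne1] := eqVneq #|T2| 1.
  have [win ->] := join_K1r e1 e2 T2_1 ne1; split=> //.
  by apply: dom_wins_first_notS => S1; apply: notS; right.
have second : dom_wins_second (join_rel e1 e2) by apply: join_dom_wins_second; lia.
by split; first exact: dom_wins_second_first.
Qed.
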